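(* The relations $\equiv_{\mathrm{lps}}$ and $\equiv_{\mathrm{rps}}$ are congruences on the free monoid $\mathcal{A}^*$.
   Context: Let $\mathcal{A}=\{1<2<3<\cdots\}$ be the positive integers viewed as a totally ordered alphabet. An lPS tableau is a finite (possibly empty) sequence of nonempty bottom-justified columns of boxes filled with elements of $\mathcal{A}$, such that the entries of each column are strictly decreasing from top to bottom and the bottom entries of the columns form a weakly increasing sequence from left to right. An rPS tableau is defined in the same way but with columns weakly decreasing from top to bottom and the bottom row strictly increasing from left to right. Right insertion of a symbol $a$ into an lPS tableau $B$: if $a$ is greater than or equal to every entry of the bottom row, append a new column consisting of $a$ at the right end; otherwise, let $z$ be the leftmost bottom-row entry with $z>a$ and put $a$ in a new box at the bottom of the column of $z$ (the previous entries of that column move up one box). Right insertion into an rPS tableau is the same except that a new column is created iff $a$ is strictly greater than every bottom-row entry, and otherwise $z$ is the leftmost bottom-row entry with $z\geq a$. For a word $w=w_1\cdots w_k$, $\mathfrak{R}_\ell(w)$ (resp. $\mathfrak{R}_r(w)$) is obtained by starting with the empty lPS (resp. rPS) tableau and right-inserting $w_1,\dots,w_k$ in order. Define $u\equiv_{\mathrm{lps}}v\iff\mathfrak{R}_\ell(u)=\mathfrak{R}_\ell(v)$ and $u\equiv_{\mathrm{rps}}v\iff\mathfrak{R}_r(u)=\mathfrak{R}_r(v)$ for $u,v\in\mathcal{A}^*$. *)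

From mathcomp Require Import all_boot.
Set Implicit Arguments. Unset Strict Implicit. Unset Printing Implicit Defensive.

(* Alphabet A = positive integers, represented as nat (words are required to
   have all letters > 0 where quantified).
   A PS tableau is a sequence of columns (left to right); each column is a
   [seq nat] listed from BOTTOM to TOP, so [head] is the bottom-row entry and
   inserting a new box at the bottom of a column is [cons]. *)

Definition word := seq nat.
Definition column := seq nat.
Definition tableau := seq column.

Fixpoint rinsert_l (a : nat) (B : tableau) : tableau :=
  match B with
  | [::] => [:: [:: a]]
  | c :: B' => if a < head 0 c then (a :: c) :: B' else c :: rinsert_l a B'
  end.

Fixpoint rinsert_r (a : nat) (B : tableau) : tableau :=
  match B with
  | [::] => [:: [:: a]]
  | c :: B' => if a <= head 0 c then (a :: c) :: B' else c :: rinsert_r a B'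
  end.

Definition Rl (w : word) : tableau := foldl (fun B a => rinsert_l a B) [::] w.
Definition Rr (w : word) : tableau := foldl (fun B a => rinsert_r a B) [::] w.

Definition lps_equiv (u v : word) : Prop := Rl u = Rl v.
Definition rps_equiv (u v : word) : Prop := Rr u = Rr v.

Definition is_word (w : word) : bool := all (fun x => 0 < x) w.

Definition congruence_on_words (R : word -> word -> Prop) : Prop :=
  [/\ (forall u, is_word u -> R u u),
      (forall u v, is_word u -> is_word v -> R u v -> R v u),
      (forall u v w, is_word u -> is_word v -> is_word w ->
                     R u v -> R v w -> R u w)
    & (forall u v w w', is_word u -> is_word v -> is_word w -> is_word w' ->
                        R u v -> R (w ++ u ++ w') (w ++ v ++ w'))].

From mathcomp Require Import all_boot.

Set Implicit Arguments.
Unset Strict Implicit.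
Unset Printing Implicit Defensive.

(* Right insertion is a left fold, so compatibility with concatenation on the
   right is immediate.  On the left, R(a u) is obtained from R(u) by
   left-inserting the column [a]: a column S goes into the first column, on
   top of the entries allowed below its bottom entry, and the entries it
   displaces slide on, as one column, into the next column.  Left insertion
   commutes with right insertion on PS tableaux, so R(a u) is a function of
   R(u). *)

Lemma congruence_kernel (X : Type) (f : word -> X) :
  (forall u v a, f u = f v -> f (a :: u) = f (a :: v)) ->
  (forall u v a, f u = f v -> f (rcons u a) = f (rcons v a)) ->
  congruence_on_words (fun u v => f u = f v).
Proof.
move=> f_cons f_rcons; split=> [//|u v _ _ -> //|u v w _ _ _ -> //|].
move=> u v w w' _ _ _ _ f_uv.
have f_cat_r : f (u ++ w') = f (v ++ w').
  elim: w' u v f_uv => [|a w' IH] u v f_uv; first by rewrite !cats0.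
  by rewrite -!cat_rcons; apply/IH/f_rcons.
by elim: w => [|a w IH] //=; apply: f_cons.
Qed.

Section PSInsertion.

Variables (T : Type) (x0 : T) (r : rel T).
Hypothesis r_trans : transitive r.
Hypothesis nr_trans : transitive (fun x y => ~~ r x y).

(* [r a z] says that [a] may be placed below [z] in a column; columns are
   listed from bottom to top. *)
Fixpoint rinsert (a : T) (B : seq (seq T)) : seq (seq T) :=
  match B with
  | [::] => [:: [:: a]]
  | c :: B' => if r a (head x0 c) then (a :: c) :: B' else c :: rinsert a B'
  end.

Definition rinsert_seq (B : seq (seq T)) (u : seq T) : seq (seq T) :=
  foldl (fun B a => rinsert a B) B u.

Fixpoint linsert (B : seq (seq T)) (S : seq T) {struct B} : seq (seq T) :=
  match S, B with
  | [::], _ => B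
  | _, [::] => [:: S]
  | m :: _, c :: B' =>
      ([seq y <- c | r y m] ++ S) :: linsert B' [seq y <- c | ~~ r y m]
  end.

Fixpoint ps_tableau (B : seq (seq T)) : bool :=
  match B with
  | [::] => true
  | c :: B' =>
      [&& ~~ nilp c, sorted r c, ps_tableau B'
        & if B' is c' :: _ then ~~ r (head x0 c') (head x0 c) else true]
  end.

Lemma sorted_split_above (c : seq T) m :
  sorted r c -> ~~ r (head x0 c) m ->
  [seq y <- c | r y m] = [::] /\ [seq y <- c | ~~ r y m] = c.
Proof.
case: c => [//|h t] c_sorted h_m.
have c_above : all (fun y => ~~ r y m) (h :: t).
  apply/andP; split=> //; apply: sub_all (order_path_min r_trans c_sorted).
  by move=> y h_y; apply: contra h_m; apply: r_trans.
split; last exact/all_filterP.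
by elim: (h :: t) c_above => //= y s IH /andP [/negbTE -> /IH].
Qed.

Lemma rinsert_ps_tableau B x : ps_tableau B -> ps_tableau (rinsert x B).
Proof.
elim: B => [//|[//|h t] B IH] /= /and3P [c_sorted B_ps B_bot].
case: ifP => [x_h|x_h] /=.
  rewrite x_h c_sorted B_ps /=.
  case: B B_bot {IH B_ps} => [//|c' B] /=.
  by apply: contra => c'_x; apply: r_trans c'_x x_h.
rewrite c_sorted IH //=.
case: B B_bot B_ps {IH} => [|[//|h1 t1] B] /= B_bot _; first by rewrite x_h.
by case: ifP => _ //=; rewrite x_h.
Qed.

Lemma linsert_ps_tableau B S : ps_tableau (S :: B) -> linsert B S = S :: B.
Proof.
elim: B S => [|c B IH] [|m s] //= /and3P [_ cB_ps c_m].
have /and4P [_ c_sorted _ _] := cB_ps.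
by have [-> ->] := sorted_split_above c_sorted c_m; rewrite IH.
Qed.

Lemma linsert_cons c B m s :
  linsert (c :: B) (m :: s) =
  ([seq y <- c | r y m] ++ m :: s) :: linsert B [seq y <- c | ~~ r y m].
Proof. by []. Qed.

Lemma linsert_rinsert B S x :
  ps_tableau B -> linsert (rinsert x B) S = rinsert x (linsert B S).
Proof.
elim: B S => [|c B IH] [|m s] //.
1,2: by rewrite /=; case: ifP.
move=> cB_ps; have /and4P [c_nnil c_sorted B_ps _] := cB_ps.
have head_below : r (head x0 c) m ->
  head x0 ([seq y <- c | r y m] ++ m :: s) = head x0 c.
  by case: c c_nnil {cB_ps c_sorted} => // h t _ /= ->.
rewrite linsert_cons [rinsert x (c :: B)]/=.
have [x_c|x_c] := boolP (r x (head x0 c)).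
  have xc_ps : ps_tableau ((x :: c) :: B).
    by have := rinsert_ps_tableau x cB_ps; rewrite /= x_c.
  rewrite linsert_cons /=; have [x_m|x_m] := boolP (r x m).
    have [c_m|c_m] := boolP (r (head x0 c) m).
      by rewrite /= head_below // x_c.
    by have [-> ->] := sorted_split_above c_sorted c_m; rewrite /= x_m.
  have c_m : ~~ r (head x0 c) m by apply: contra x_m; apply: r_trans.
  have [-> ->] := sorted_split_above c_sorted c_m.
  rewrite (linsert_ps_tableau xc_ps) (linsert_ps_tableau cB_ps) /=.
  by rewrite (negbTE x_m) x_c.
rewrite /= IH //; have [c_m|c_m] := boolP (r (head x0 c) m).
  by rewrite /= head_below // (negbTE x_c).
have [-> _] := sorted_split_above c_sorted c_m.
by rewrite /= (negbTE (nr_trans x_c c_m)).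
Qed.

Lemma linsert_rinsert_seq B S u :
  ps_tableau B -> linsert (rinsert_seq B u) S = rinsert_seq (linsert B S) u.
Proof.
elim: u B => [//|a u IH] B B_ps /=.
by rewrite -linsert_rinsert // IH // rinsert_ps_tableau.
Qed.

Lemma rinsert_seq_cons a u :
  rinsert_seq [::] (a :: u) = linsert (rinsert_seq [::] u) [:: a].
Proof. by rewrite linsert_rinsert_seq. Qed.

Lemma rinsert_seq_rcons u a :
  rinsert_seq [::] (rcons u a) = rinsert a (rinsert_seq [::] u).
Proof. exact: foldl_rcons. Qed.

End PSInsertion.

Lemma Rl_rinsert_seq u : Rl u = rinsert_seq 0 ltn [::] u.
Proof. by []. Qed.

Lemma Rr_rinsert_seq u : Rr u = rinsert_seq 0 leq [::] u.
Proof. by []. Qed.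

Theorem proposition3p21 :
  congruence_on_words lps_equiv /\ congruence_on_words rps_equiv.
Proof.
have ngeq_trans : transitive (fun x y => ~~ (x <= y)).
  by move=> y x z; rewrite -!ltnNge => /[swap]; apply: ltn_trans.
have ngtn_trans : transitive (fun x y => ~~ (x < y)).
  by move=> y x z; rewrite -!leqNgt => /[swap]; apply: leq_trans.
split; apply: congruence_kernel => u v a.
- by rewrite !Rl_rinsert_seq !(rinsert_seq_cons _ ltn_trans ngtn_trans) => ->.
- by rewrite !Rl_rinsert_seq !rinsert_seq_rcons => ->.
- by rewrite !Rr_rinsert_seq !(rinsert_seq_cons _ leq_trans ngeq_trans) => ->.
- by rewrite !Rr_rinsert_seq !rinsert_seq_rcons => ->.
Qed.
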